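(* Let $X\in\mathbb{R}^{n\times p}$, $y\in\mathbb{R}^n$, $\lambda>0$, $\alpha>0$, $G=X^\top X+\alpha I_p$, $\tilde y=X^\top y$, and $F(\beta,d)=\big(\beta-T_\lambda(\beta+d),\ G\beta+nd-\tilde y\big)$. Consider the semismooth Newton iteration $z^{k+1}=z^k-H_k^{-1}F(z^k)$, $z^k=(\beta^k,d^k)$, where $$H_k=\begin{pmatrix} I_p-D_k & -D_k\\ G & nI_p\end{pmatrix},\qquad D_k=\operatorname{diag}\big(\mathbf 1_{\{|\beta^k_i+d^k_i|>\lambda\}}\big)_{i=1}^p .$$ Let $\hat z=(\hat\beta_{\lambda,\alpha},\hat d_{\lambda,\alpha})$ be the unique root of $F$. Then there is a neighborhood $U$ of $\hat z$ such that for every $z^0\in U$ the iterates are well defined, $z^k\to\hat z$, and $\|z^{k+1}-\hat z\|_2=o(\|z^k-\hat z\|_2)$ (local superlinear convergence). In particular $\beta^k$ converges locally superlinearly to $\hat\beta_{\lambda,\alpha}$, the unique minimizer of $J_{\lambda,\alpha}(\beta)=\frac{1}{2n}\|X\beta-y\|_2^2+\lambda\|\beta\|_1+\frac{\alpha}{2n}\|\beta\|_2^2$.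
   Context: $T_\lambda$ is the componentwise soft-threshold operator $T_\lambda(x)_i=\operatorname{sgn}(x_i)\max(|x_i|-\lambda,0)$. Equivalently, with $A_k=\{i:|\beta^k_i+d^k_i|>\lambda\}$, $B_k$ its complement, one step reads: $\beta^{k+1}_{B_k}=0$, $d^{k+1}_{A_k}=\lambda\operatorname{sgn}(\beta^k_{A_k}+d^k_{A_k})$, $\beta^{k+1}_{A_k}=G_{A_kA_k}^{-1}(\tilde y_{A_k}-nd^{k+1}_{A_k})$, $d^{k+1}_{B_k}=(\tilde y_{B_k}-G_{B_kA_k}\beta^{k+1}_{A_k})/n$. *)

(* classical reals. Vectors are nat -> R (only indices < dim
   matter), matrices are nat -> nat -> R. *)
From Stdlib Require Import Reals Lra Lia.
Open Scope R_scope.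

Fixpoint rsum (m : nat) (f : nat -> R) : R :=
  match m with
  | O => 0
  | S m' => rsum m' f + f m'
  end.

Definition soft (lam x : R) : R :=
  (if Rlt_dec 0 x then 1 else if Rlt_dec x 0 then -1 else 0) * Rmax (Rabs x - lam) 0.

Definition Gmat (n : nat) (X : nat -> nat -> R) (alpha : R) (i j : nat) : R :=
  rsum n (fun k => X k i * X k j) + (if Nat.eq_dec i j then alpha else 0).

Definition ytil (n : nat) (X : nat -> nat -> R) (y : nat -> R) (j : nat) : R :=
  rsum n (fun k => X k j * y k).

(* z in R^{2p} encodes (beta, d): beta_i = z i, d_i = z (p + i)%nat, i < p. *)
Definition Fmap (n p : nat) (X : nat -> nat -> R) (y : nat -> R) (lam alpha : R)
  (z : nat -> R) (i : nat) : R :=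
  if Nat.ltb i p then z i - soft lam (z i + z (p + i)%nat)
  else let i' := (i - p)%nat in
       rsum p (fun j => Gmat n X alpha i' j * z j) + INR n * z (p + i')%nat
       - ytil n X y i'.

Definition Dind (p : nat) (lam : R) (z : nat -> R) (i : nat) : R :=
  if Rlt_dec lam (Rabs (z i + z (p + i)%nat)) then 1 else 0.

Definition kron (i j : nat) : R := if Nat.eq_dec i j then 1 else 0.

Definition Hmat (n p : nat) (X : nat -> nat -> R) (lam alpha : R)
  (z : nat -> R) (i j : nat) : R :=
  if Nat.ltb i p then
    (if Nat.ltb j p then kron i j - Dind p lam z i * kron i j
     else - Dind p lam z i * kron i (j - p))
  else
    (if Nat.ltb j p then Gmat n X alpha (i - p) j
     else INR n * kron (i - p) (j - p)).

Definition is_inverse (m : nat) (A M : nat -> nat -> R) : Prop :=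
  (forall i j, (i < m)%nat -> (j < m)%nat ->
     rsum m (fun k => M i k * A k j) = kron i j) /\
  (forall i j, (i < m)%nat -> (j < m)%nat ->
     rsum m (fun k => A i k * M k j) = kron i j).

Definition newton_step (n p : nat) (X : nat -> nat -> R) (y : nat -> R)
  (lam alpha : R) (z z' : nat -> R) : Prop :=
  exists M, is_inverse (2 * p) (Hmat n p X lam alpha z) M /\
    forall i, (i < 2 * p)%nat ->
      z' i = z i - rsum (2 * p) (fun k => M i k * Fmap n p X y lam alpha z k).

Definition dist2 (m : nat) (u v : nat -> R) : R :=
  sqrt (rsum m (fun i => (u i - v i) ^ 2)).

Definition Jobj (n p : nat) (X : nat -> nat -> R) (y : nat -> R) (lam alpha : R)
  (b : nat -> R) : R :=
  / (2 * INR n) * rsum n (fun i => (rsum p (fun j => X i j * b j) - y i) ^ 2)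
  + lam * rsum p (fun j => Rabs (b j))
  + alpha / (2 * INR n) * rsum p (fun j => b j ^ 2).

(* Near the root zhat every index i has its active/inactive status frozen:
   when |betahat_i + dhat_i| <> lam a small perturbation does not cross the
   threshold, and when |betahat_i + dhat_i| = lam one has betahat_i = 0, so
   both branches of the soft-threshold give the same linear expression.
   Hence F(z) = H(z) (z - zhat) exactly, and one Newton step from any z close
   to zhat lands on zhat; superlinear convergence follows trivially.
   H(z) is always invertible: a left null vector (u, v) satisfies
   v^T G v = 0 because D(z) is a 0/1 diagonal, and G is positive definite.
   Minimality of betahat: the root equations say dhat_i is a subgradient of
   lam |.| at betahat_i and n dhat = -(X^T (X betahat - y) + alpha betahat),
   so J(b) - J(betahat) is a nonnegative l1 term plus a positive definite
   quadratic in b - betahat. *)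

Set Warnings "-notation-overridden,-ambiguous-paths".
From Stdlib Require Import Reals Lra Lia.
From mathcomp Require all_boot all_algebra Rstruct.
Open Scope R_scope.

Module MatrixInverse.
Import all_boot all_algebra Rstruct.
Import GRing.Theory.

Lemma rsum_big m (f : nat -> R) : rsum m f = (\sum_(i < m) f i)%R.
Proof.
elim: m => [|m IH] /=; first by rewrite big_ord0.
by rewrite big_ord_recr /= IH.
Qed.

Lemma is_inverse_of_left_kernel_trivial (m : nat) (A : nat -> nat -> R) :
  (forall u : nat -> R, (forall j, lt j m -> rsum m (fun i => u i * A i j) = 0) ->
     forall i, lt i m -> u i = 0) ->
  exists M, is_inverse m A M.
Proof.
case: m => [|m] Hker.
  by exists (fun _ _ => 0); split => i j /leP.
pose Am : 'M[R]_m.+1 := (\matrix_(i, j) A i j)%R.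
have kerA0 : kermx Am = 0%R.
  apply/matrixP => i k.
  set r := row i (kermx Am).
  have rA0 : (r *m Am = 0)%R by rewrite -row_mul mulmx_ker row0.
  have hr : forall j, lt j m.+1 -> rsum m.+1 (fun l => r ord0 (inord l) * A l j) = 0.
    move=> j /ltP hj; rewrite rsum_big.
    transitivity ((r *m Am)%R ord0 (inord j)); last by rewrite rA0 mxE.
    rewrite mxE; apply: eq_bigr => l _.
    by rewrite [Am _ _]mxE inordK // inord_val.
  have := Hker _ hr k (ltP (ltn_ord k)).
  by rewrite /= inord_val /r mxE => ->; rewrite mxE.
have unitA : Am \in unitmx.
  rewrite -row_free_unit /row_free.
  have := mxrank_ker Am; rewrite kerA0 mxrank0 => /eqP.
  rewrite eq_sym subn_eq0 => h.
  by apply/eqP/anti_leq; rewrite rank_leq_row h.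
have kronE : forall i j, lt i m.+1 -> lt j m.+1 ->
    (1%:M : 'M[R]_m.+1)%R (inord i) (inord j) = kron i j.
  move=> i j /ltP hi /ltP hj; rewrite mxE /kron.
  case: Nat.eq_dec => [->|ne]; first by rewrite eqxx.
  by case: eqP => // /(congr1 val); rewrite /= !inordK.
have AmE : forall (k : 'I_m.+1) j, lt j m.+1 -> A k j = Am k (inord j).
  by move=> k j /ltP hj; rewrite mxE inordK // inord_val.
have AmE' : forall i (k : 'I_m.+1), lt i m.+1 -> A i k = Am (inord i) k.
  by move=> i k /ltP hi; rewrite mxE inordK // inord_val.
exists (fun i j => invmx Am (inord i) (inord j)).
split => i j hi hj.
- rewrite -kronE // -(mulVmx unitA) mxE rsum_big.
  by apply: eq_bigr => k _; rewrite AmE // inord_val.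
- rewrite -kronE // -(mulmxV unitA) mxE rsum_big.
  by apply: eq_bigr => k _; rewrite AmE' // inord_val.
Qed.
End MatrixInverse.

Lemma rsum_ext m f g : (forall i, (i < m)%nat -> f i = g i) -> rsum m f = rsum m g.
Proof.
induction m; intros H; simpl; auto.
rewrite IHm, (H m); [reflexivity | lia | intros; apply H; lia].
Qed.

Lemma rsum_plus m f g : rsum m (fun i => f i + g i) = rsum m f + rsum m g.
Proof. induction m; simpl; [ring | rewrite IHm; ring]. Qed.

Lemma rsum_minus m f g : rsum m (fun i => f i - g i) = rsum m f - rsum m g.
Proof. induction m; simpl; [ring | rewrite IHm; ring]. Qed.

Lemma rsum_mult_l m c f : rsum m (fun i => c * f i) = c * rsum m f.
Proof. induction m; simpl; [ring | rewrite IHm; ring]. Qed.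

Lemma rsum_eq0 m f : (forall i, (i < m)%nat -> f i = 0) -> rsum m f = 0.
Proof. induction m; intros H; simpl; [ring|]. rewrite IHm, H; [ring | lia | intros; apply H; lia]. Qed.

Lemma rsum_swap m k F :
  rsum m (fun i => rsum k (fun j => F i j)) = rsum k (fun j => rsum m (fun i => F i j)).
Proof.
induction m; simpl.
- symmetry; apply rsum_eq0; auto.
- rewrite IHm, <- rsum_plus. reflexivity.
Qed.

Lemma rsum_add a b f : rsum (a + b) f = rsum a f + rsum b (fun j => f (a + j)%nat).
Proof.
induction b; simpl.
- rewrite Nat.add_0_r; ring.
- rewrite Nat.add_succ_r; simpl; rewrite IHb; ring.
Qed.

Lemma rsum_double p f : rsum (2 * p) f = rsum p f + rsum p (fun j => f (p + j)%nat).
Proof. replace (2 * p)%nat with (p + p)%nat by lia. apply rsum_add. Qed.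

Lemma kron_sym i j : kron i j = kron j i.
Proof. unfold kron; destruct (Nat.eq_dec i j), (Nat.eq_dec j i); auto; lia. Qed.

Lemma rsum_kron m i g : (i < m)%nat -> rsum m (fun k => kron i k * g k) = g i.
Proof.
induction m; intros H; [lia|]. simpl. unfold kron at 2.
destruct (Nat.eq_dec i m) as [->|ne].
- rewrite rsum_eq0; [ring|]. intros k Hk; unfold kron; destruct (Nat.eq_dec m k); [lia|ring].
- rewrite IHm by lia. ring.
Qed.

Lemma rsum_nonneg m f : (forall i, (i < m)%nat -> 0 <= f i) -> 0 <= rsum m f.
Proof.
induction m; intros H; simpl; [lra|].
assert (0 <= f m) by (apply H; lia).
assert (0 <= rsum m f) by (apply IHm; intros; apply H; lia). lra.
Qed.

Lemma rsum_sq_nonneg m f : 0 <= rsum m (fun i => f i ^ 2).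
Proof. apply rsum_nonneg; intros; nra. Qed.

Lemma rsum_sq_ge_term m f i : (i < m)%nat -> f i ^ 2 <= rsum m (fun k => f k ^ 2).
Proof.
induction m; intros H; [lia|]. cbn [rsum].
pose proof (rsum_sq_nonneg m f). pose proof (pow2_ge_0 (f m)).
destruct (Nat.eq_dec i m); [subst; lra|].
assert (f i ^ 2 <= rsum m (fun k => f k ^ 2)) by (apply IHm; lia). lra.
Qed.

Lemma rsum_sq_eq0 m f : rsum m (fun i => f i ^ 2) = 0 -> forall i, (i < m)%nat -> f i = 0.
Proof.
intros H i Hi. pose proof (rsum_sq_ge_term m f i Hi).
apply Rsqr_eq_0; rewrite Rsqr_pow2. pose proof (pow2_ge_0 (f i)). lra.
Qed.

Lemma Rabs_sub_le_dist2 m u v i : (i < m)%nat -> Rabs (u i - v i) <= dist2 m u v.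
Proof.
intros Hi. unfold dist2. rewrite <- sqrt_Rsqr_abs. apply sqrt_le_1_alt.
rewrite Rsqr_pow2. exact (rsum_sq_ge_term m (fun k => u k - v k) i Hi).
Qed.

Lemma dist2_eq0 m u v : (forall i, (i < m)%nat -> u i = v i) -> dist2 m u v = 0.
Proof.
intros H. unfold dist2. rewrite rsum_eq0; [apply sqrt_0|].
intros i Hi; rewrite H by auto; ring.
Qed.

Lemma finite_lower_bound_pos m (f : nat -> R) :
  (forall i, (i < m)%nat -> 0 < f i) -> exists c, 0 < c /\ forall i, (i < m)%nat -> c <= f i.
Proof.
induction m as [|m IH]; intros Hf.
- exists 1. split; [lra | intros; lia].
- destruct IH as [c [Hc Hle]]; [intros; apply Hf; lia|].
  assert (0 < f m) by (apply Hf; lia).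
  exists (Rmin c (f m)). split; [now apply Rmin_glb_lt|].
  intros i Hi. destruct (Nat.eq_dec i m) as [->|ne]; [apply Rmin_r|].
  pose proof (Rmin_l c (f m)). pose proof (Hle i ltac:(lia)). lra.
Qed.

Lemma threshold_margin lam (s : nat -> R) m : 0 < lam ->
  exists c, 0 < c /\ c <= lam /\
    forall i, (i < m)%nat -> Rabs (s i) <> lam -> c <= Rabs (Rabs (s i) - lam).
Proof.
intros Hlam.
destruct (finite_lower_bound_pos m (fun i =>
   if Req_dec_T (Rabs (s i)) lam then lam else Rabs (Rabs (s i) - lam))) as [c [Hc Hle]].
{ intros i _. destruct Req_dec_T as [|ne]; [lra|].
  apply Rabs_pos_lt. intros E. apply ne. lra. }
exists (Rmin lam c). repeat split.
- now apply Rmin_glb_lt.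
- apply Rmin_l.
- intros i Hi ne. pose proof (Hle i Hi) as Hi'. cbv beta in Hi'.
  destruct Req_dec_T; [contradiction|]. pose proof (Rmin_r lam c). lra.
Qed.

Ltac destruct_real_tests := repeat match goal with
 | |- context [Rlt_dec ?x ?y] => destruct (Rlt_dec x y)
 | H: context [Rlt_dec ?x ?y] |- _ => destruct (Rlt_dec x y)
 | |- context [Rle_dec ?x ?y] => destruct (Rle_dec x y)
 | H: context [Rle_dec ?x ?y] |- _ => destruct (Rle_dec x y)
 | |- context [Rcase_abs ?x] => destruct (Rcase_abs x)
 | H: context [Rcase_abs ?x] |- _ => destruct (Rcase_abs x)
 end.

Lemma soft_threshold_locally_linear lam a b ah bh :
  0 < lam -> ah = soft lam (ah + bh) ->
  Rabs ((a + b) - (ah + bh)) < lam ->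
  (Rabs (ah + bh) <> lam -> Rabs ((a + b) - (ah + bh)) < Rabs (Rabs (ah + bh) - lam)) ->
  a - soft lam (a + b) =
  (1 - (if Rlt_dec lam (Rabs (a + b)) then 1 else 0)) * (a - ah)
  - (if Rlt_dec lam (Rabs (a + b)) then 1 else 0) * (b - bh).
Proof.
intros Hlam Hroot Hnear Hgap.
destruct (Req_dec (Rabs (ah + bh)) lam) as [E|NE].
- clear Hgap. unfold soft, Rmax, Rabs in *. destruct_real_tests; lra.
- specialize (Hgap NE). unfold soft, Rmax, Rabs in *. destruct_real_tests; lra.
Qed.

Lemma soft_threshold_subgradient lam bh dh b : 0 < lam -> bh = soft lam (bh + dh) ->
  lam * Rabs bh + dh * (b - bh) <= lam * Rabs b.
Proof. intros Hlam Hroot. unfold soft, Rmax, Rabs in *. destruct_real_tests; nra. Qed.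

Lemma newton_update_exact m (A M : nat -> nat -> R) (Fz z zhat : nat -> R) :
  is_inverse m A M ->
  (forall i, (i < m)%nat -> Fz i = rsum m (fun k => A i k * (z k - zhat k))) ->
  forall i, (i < m)%nat -> z i - rsum m (fun k => M i k * Fz k) = zhat i.
Proof.
intros [HMA _] HF i Hi.
rewrite (rsum_ext m _ (fun k => rsum m (fun j => M i k * A k j * (z j - zhat j)))).
2:{ intros k Hk. rewrite HF, <- rsum_mult_l by auto. apply rsum_ext; intros; ring. }
rewrite rsum_swap, (rsum_ext m _ (fun j => kron i j * (z j - zhat j))).
2:{ intros j Hj. rewrite <- HMA, Rmult_comm, <- rsum_mult_l by auto. apply rsum_ext; intros; ring. }
rewrite rsum_kron by auto. ring.
Qed.

Section SemismoothNewton.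

Variables (n p : nat) (X : nat -> nat -> R) (y : nat -> R) (lam alpha : R).

Local Notation F := (Fmap n p X y lam alpha).
Local Notation H := (Hmat n p X lam alpha).
Local Notation D := (Dind p lam).
Local Notation G := (Gmat n X alpha).

Lemma Hmat_top_left z i k : (i < p)%nat -> (k < p)%nat -> H z i k = (1 - D z i) * kron i k.
Proof. intros Hi Hk. unfold Hmat. destruct (Nat.ltb_spec i p), (Nat.ltb_spec k p); try lia. ring. Qed.

Lemma Hmat_top_right z i k : (i < p)%nat -> H z i (p + k) = - D z i * kron i k.
Proof.
intros Hi. unfold Hmat. destruct (Nat.ltb_spec i p), (Nat.ltb_spec (p + k) p); try lia.
replace (p + k - p)%nat with k by lia. reflexivity.
Qed.

Lemma Hmat_bottom_left z j k : (k < p)%nat -> H z (p + j) k = G j k.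
Proof.
intros Hk. unfold Hmat. destruct (Nat.ltb_spec (p + j) p), (Nat.ltb_spec k p); try lia.
replace (p + j - p)%nat with j by lia. reflexivity.
Qed.

Lemma Hmat_bottom_right z j k : H z (p + j) (p + k) = INR n * kron j k.
Proof.
unfold Hmat. destruct (Nat.ltb_spec (p + j) p), (Nat.ltb_spec (p + k) p); try lia.
replace (p + j - p)%nat with j by lia. replace (p + k - p)%nat with k by lia. reflexivity.
Qed.

Lemma Hmat_mul_top z v i : (i < p)%nat ->
  rsum (2 * p) (fun k => H z i k * v k) = (1 - D z i) * v i - D z i * v (p + i)%nat.
Proof.
intros Hi. rewrite rsum_double; cbv beta.
rewrite (rsum_ext p _ (fun k => kron i k * ((1 - D z i) * v k))).
2:{ intros k Hk. rewrite Hmat_top_left by auto. ring. }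
rewrite (rsum_ext p (fun k => H z i (p + k) * v (p + k)%nat)
          (fun k => kron i k * (- D z i * v (p + k)%nat))).
2:{ intros k Hk. rewrite Hmat_top_right by auto. ring. }
rewrite !rsum_kron by auto. ring.
Qed.

Lemma Hmat_mul_bottom z v j : (j < p)%nat ->
  rsum (2 * p) (fun k => H z (p + j) k * v k) =
  rsum p (fun k => G j k * v k) + INR n * v (p + j)%nat.
Proof.
intros Hj. rewrite rsum_double; cbv beta.
rewrite (rsum_ext p (fun k => H z (p + j) k * v k) (fun k => G j k * v k)).
2:{ intros k Hk. now rewrite Hmat_bottom_left. }
rewrite (rsum_ext p (fun k => H z (p + j) (p + k) * v (p + k)%nat)
          (fun k => kron j k * (INR n * v (p + k)%nat))).
2:{ intros k Hk. rewrite Hmat_bottom_right. ring. }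
now rewrite rsum_kron.
Qed.

Lemma mul_Hmat_top z u j : (j < p)%nat ->
  rsum (2 * p) (fun i => u i * H z i j) =
  (1 - D z j) * u j + rsum p (fun i => u (p + i)%nat * G i j).
Proof.
intros Hj. rewrite rsum_double; cbv beta.
rewrite (rsum_ext p (fun i => u i * H z i j) (fun i => kron j i * ((1 - D z i) * u i))).
2:{ intros i Hi. rewrite Hmat_top_left, kron_sym by auto. ring. }
rewrite (rsum_ext p (fun i => u (p + i)%nat * H z (p + i)%nat j) (fun i => u (p + i)%nat * G i j)).
2:{ intros i Hi. now rewrite Hmat_bottom_left. }
now rewrite rsum_kron.
Qed.

Lemma mul_Hmat_bottom z u j : (j < p)%nat ->
  rsum (2 * p) (fun i => u i * H z i (p + j)) = - D z j * u j + INR n * u (p + j)%nat.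
Proof.
intros Hj. rewrite rsum_double; cbv beta.
rewrite (rsum_ext p (fun i => u i * H z i (p + j)%nat) (fun i => kron j i * (- D z i * u i))).
2:{ intros i Hi. rewrite Hmat_top_right, kron_sym by auto. ring. }
rewrite (rsum_ext p (fun i => u (p + i)%nat * H z (p + i) (p + j))
          (fun i => kron j i * (INR n * u (p + i)%nat))).
2:{ intros i Hi. rewrite Hmat_bottom_right, kron_sym. ring. }
now rewrite !rsum_kron.
Qed.

Lemma Fmap_top z i : (i < p)%nat -> F z i = z i - soft lam (z i + z (p + i)%nat).
Proof. intros Hi. unfold Fmap. destruct (Nat.ltb_spec i p); [reflexivity | lia]. Qed.

Lemma Fmap_bottom z j :
  F z (p + j) = rsum p (fun k => G j k * z k) + INR n * z (p + j)%nat - ytil n X y j.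
Proof.
unfold Fmap. destruct (Nat.ltb_spec (p + j) p); [lia|].
cbv zeta. replace (p + j - p)%nat with j by lia. reflexivity.
Qed.

Lemma Gmat_quadratic_form v :
  rsum p (fun j => v j * rsum p (fun i => v i * G i j)) =
  rsum n (fun k => (rsum p (fun i => X k i * v i)) ^ 2) + alpha * rsum p (fun j => v j ^ 2).
Proof.
unfold Gmat.
rewrite (rsum_ext p _ (fun j => rsum n (fun k => rsum p (fun i => X k i * v i) * (X k j * v j))
                                 + alpha * v j ^ 2)).
2:{ intros j Hj.
    rewrite (rsum_ext p _ (fun i => rsum n (fun k => X k i * v i * X k j) + alpha * (kron j i * v i))).
    2:{ intros i Hi. rewrite Rmult_plus_distr_l, <- rsum_mult_l. f_equal.
        - apply rsum_ext; intros; ring.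
        - unfold kron; destruct (Nat.eq_dec i j), (Nat.eq_dec j i); try lia; ring. }
    rewrite rsum_plus, rsum_mult_l, rsum_kron, rsum_swap, Rmult_plus_distr_l, <- rsum_mult_l by auto.
    f_equal; [|ring]. apply rsum_ext; intros k _.
    rewrite (Rmult_comm (rsum p _)), <- !rsum_mult_l. apply rsum_ext; intros; ring. }
rewrite rsum_plus, rsum_swap, rsum_mult_l. f_equal. apply rsum_ext; intros k _.
rewrite rsum_mult_l. ring.
Qed.

Lemma Hmat_invertible z : (0 < n)%nat -> 0 < alpha -> exists M, is_inverse (2 * p) (H z) M.
Proof.
intros Hn Halpha. apply MatrixInverse.is_inverse_of_left_kernel_trivial. intros u Hu.
assert (HnR : 0 < INR n) by (apply lt_0_INR; lia).
assert (Htop : forall j, (j < p)%nat ->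
  (1 - D z j) * u j + rsum p (fun i => u (p + i)%nat * G i j) = 0).
{ intros j Hj. rewrite <- mul_Hmat_top by auto. apply Hu. lia. }
assert (Hbot : forall j, (j < p)%nat -> - D z j * u j + INR n * u (p + j)%nat = 0).
{ intros j Hj. rewrite <- mul_Hmat_bottom by auto. apply Hu. lia. }
(* Each row j kills u_(p+j) (inactive, D = 0) or (G u_bottom)_j (active, D = 1). *)
assert (Hquad : rsum p (fun j => u (p + j)%nat * rsum p (fun i => u (p + i)%nat * G i j)) = 0).
{ apply rsum_eq0. intros j Hj. specialize (Htop j Hj). specialize (Hbot j Hj).
  unfold Dind in *. destruct Rlt_dec.
  - replace (rsum p (fun i => u (p + i)%nat * G i j)) with 0 by lra. ring.
  - replace (u (p + j)%nat) with 0 by nra. ring. }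
rewrite Gmat_quadratic_form in Hquad.
pose proof (rsum_sq_nonneg n (fun k => rsum p (fun i => X k i * u (p + i)%nat))).
pose proof (rsum_sq_nonneg p (fun j => u (p + j)%nat)).
assert (Hbottom : forall j, (j < p)%nat -> u (p + j)%nat = 0).
{ apply (rsum_sq_eq0 p (fun j => u (p + j)%nat)). nra. }
assert (Htop0 : forall j, (j < p)%nat -> u j = 0).
{ intros j Hj. specialize (Htop j Hj). specialize (Hbot j Hj).
  rewrite Hbottom in Hbot by auto.
  rewrite rsum_eq0 in Htop by (intros i Hi; rewrite Hbottom by auto; ring).
  unfold Dind in *. destruct Rlt_dec; lra. }
intros i Hi. destruct (Nat.lt_ge_cases i p); [auto|].
replace i with (p + (i - p))%nat by lia. apply Hbottom. lia.
Qed.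

Variable zhat : nat -> R.
Hypothesis Hlam : 0 < lam.
Hypothesis Hroot : forall i, (i < 2 * p)%nat -> F zhat i = 0.

Lemma root_top i : (i < p)%nat -> zhat i = soft lam (zhat i + zhat (p + i)%nat).
Proof. intros Hi. pose proof (Hroot i ltac:(lia)). rewrite Fmap_top in * by auto. lra. Qed.

Lemma root_bottom j : (j < p)%nat ->
  rsum p (fun k => G j k * zhat k) + INR n * zhat (p + j)%nat = ytil n X y j.
Proof. intros Hj. pose proof (Hroot (p + j) ltac:(lia)). rewrite Fmap_bottom in *. lra. Qed.

Definition activity_preserved (z : nat -> R) : Prop :=
  forall i, (i < p)%nat ->
    let ds := (z i + z (p + i)%nat) - (zhat i + zhat (p + i)%nat) in
    Rabs ds < lam /\
    (Rabs (zhat i + zhat (p + i)%nat) <> lam ->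
       Rabs ds < Rabs (Rabs (zhat i + zhat (p + i)%nat) - lam)).

Lemma activity_preserved_near_root :
  exists delta, 0 < delta /\
    forall z, dist2 (2 * p) z zhat < delta -> activity_preserved z.
Proof.
destruct (threshold_margin lam (fun i => zhat i + zhat (p + i)%nat) p Hlam)
  as [c [Hc [Hcl Hgap]]].
exists (c / 2). split; [lra|]. intros z Hd i Hi. cbv zeta.
assert (Hds : Rabs ((z i + z (p + i)%nat) - (zhat i + zhat (p + i)%nat)) < c).
{ pose proof (Rabs_sub_le_dist2 (2 * p) z zhat i ltac:(lia)).
  pose proof (Rabs_sub_le_dist2 (2 * p) z zhat (p + i) ltac:(lia)).
  pose proof (Rabs_triang (z i - zhat i) (z (p + i)%nat - zhat (p + i)%nat)).
  replace ((z i + z (p + i)%nat) - (zhat i + zhat (p + i)%nat))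
    with ((z i - zhat i) + (z (p + i)%nat - zhat (p + i)%nat)) by ring. lra. }
split; [lra|]. intros ne. specialize (Hgap i Hi ne). lra.
Qed.

Lemma Fmap_eq_Hmat_mul z : activity_preserved z ->
  forall i, (i < 2 * p)%nat -> F z i = rsum (2 * p) (fun k => H z i k * (z k - zhat k)).
Proof.
intros Hz i Hi. destruct (Nat.lt_ge_cases i p) as [Hip|Hip].
- rewrite Fmap_top, Hmat_mul_top by auto. destruct (Hz i Hip) as [Hnear Hgap].
  apply soft_threshold_locally_linear; auto using root_top.
- replace i with (p + (i - p))%nat by lia. set (j := (i - p)%nat).
  assert (Hj : (j < p)%nat) by (unfold j; lia).
  rewrite Fmap_bottom, Hmat_mul_bottom, <- (root_bottom j Hj) by auto.
  rewrite (rsum_ext p (fun k => G j k * (z k - zhat k)) (fun k => G j k * z k - G j k * zhat k)),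
    rsum_minus.
  + ring.
  + intros k _. ring.
Qed.

Lemma newton_step_lands_on_root z z' : activity_preserved z ->
  newton_step n p X y lam alpha z z' -> forall i, (i < 2 * p)%nat -> z' i = zhat i.
Proof.
intros Hz [M [HM Hz']] i Hi. rewrite Hz' by auto.
exact (newton_update_exact _ _ _ _ _ _ HM (Fmap_eq_Hmat_mul z Hz) i Hi).
Qed.

Lemma newton_step_to_root z : (0 < n)%nat -> 0 < alpha -> activity_preserved z ->
  newton_step n p X y lam alpha z zhat.
Proof.
intros Hn Halpha Hz. destruct (Hmat_invertible z Hn Halpha) as [M HM].
exists M. split; auto. intros i Hi. symmetry.
exact (newton_update_exact _ _ _ _ _ _ HM (Fmap_eq_Hmat_mul z Hz) i Hi).
Qed.

Lemma Xt_residual_at_root j : (j < p)%nat ->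
  rsum n (fun k => X k j * (rsum p (fun i => X k i * zhat i) - y k)) =
  - INR n * zhat (p + j)%nat - alpha * zhat j.
Proof.
intros Hj. pose proof (root_bottom j Hj) as Hr.
rewrite (rsum_ext p (fun i => G j i * zhat i)
   (fun i => rsum n (fun k => X k j * X k i * zhat i) + kron j i * (alpha * zhat i))) in Hr.
2:{ intros i _. unfold Gmat, kron. rewrite Rmult_plus_distr_r, Rmult_comm, <- rsum_mult_l.
    f_equal; [apply rsum_ext; intros; ring|]. destruct (Nat.eq_dec j i); ring. }
rewrite rsum_plus, rsum_kron in Hr by auto.
rewrite (rsum_ext n _ (fun k => rsum p (fun i => X k j * X k i * zhat i) - X k j * y k)).
2:{ intros k _. rewrite Rmult_minus_distr_l, <- rsum_mult_l. f_equal. apply rsum_ext; intros; ring. }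
rewrite rsum_minus, rsum_swap. unfold ytil in Hr. lra.
Qed.

Lemma Jobj_sub_root b : (0 < n)%nat ->
  Jobj n p X y lam alpha b - Jobj n p X y lam alpha zhat =
  (lam * rsum p (fun j => Rabs (b j)) - lam * rsum p (fun j => Rabs (zhat j))
   - rsum p (fun j => (b j - zhat j) * zhat (p + j)%nat))
  + / (2 * INR n) * rsum n (fun k => (rsum p (fun j => X k j * (b j - zhat j))) ^ 2)
  + alpha / (2 * INR n) * rsum p (fun j => (b j - zhat j) ^ 2).
Proof.
intros Hn. assert (HnR : 0 < INR n) by (apply lt_0_INR; lia).
set (r := fun k => rsum p (fun j => X k j * zhat j) - y k).
set (e := fun k => rsum p (fun j => X k j * (b j - zhat j))).
assert (Hloss : rsum n (fun k => (rsum p (fun j => X k j * b j) - y k) ^ 2) =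
   rsum n (fun k => r k ^ 2) + 2 * rsum n (fun k => r k * e k) + rsum n (fun k => e k ^ 2)).
{ rewrite <- rsum_mult_l, <- !rsum_plus. apply rsum_ext; intros k _.
  replace (rsum p (fun j => X k j * b j)) with (rsum p (fun j => X k j * zhat j) + e k).
  - unfold r; ring.
  - unfold e. rewrite <- rsum_plus. apply rsum_ext; intros; ring. }
assert (Hcross : rsum n (fun k => r k * e k) =
   - INR n * rsum p (fun j => (b j - zhat j) * zhat (p + j)%nat)
   - alpha * rsum p (fun j => zhat j * (b j - zhat j))).
{ rewrite (rsum_ext n _ (fun k => rsum p (fun j => r k * X k j * (b j - zhat j)))).
  2:{ intros k _. unfold e. rewrite <- rsum_mult_l. apply rsum_ext; intros; ring. }
  rewrite rsum_swap, <- !rsum_mult_l, <- rsum_minus. apply rsum_ext; intros j Hj.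
  rewrite (rsum_ext n _ (fun k => (b j - zhat j) *
             (X k j * (rsum p (fun i => X k i * zhat i) - y k)))).
  2:{ intros k _. unfold r. ring. }
  rewrite rsum_mult_l, Xt_residual_at_root by auto. ring. }
assert (Hridge : rsum p (fun j => b j ^ 2) = rsum p (fun j => zhat j ^ 2)
   + 2 * rsum p (fun j => zhat j * (b j - zhat j)) + rsum p (fun j => (b j - zhat j) ^ 2)).
{ rewrite <- rsum_mult_l, <- !rsum_plus. apply rsum_ext; intros; ring. }
unfold Jobj. rewrite Hloss, Hridge, Hcross. unfold r, e. field. lra.
Qed.

Lemma Jobj_unique_minimizer (Hn : (0 < n)%nat) (Halpha : 0 < alpha) b :
  Jobj n p X y lam alpha zhat <= Jobj n p X y lam alpha b /\
  (Jobj n p X y lam alpha b = Jobj n p X y lam alpha zhat ->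
     forall j, (j < p)%nat -> b j = zhat j).
Proof.
pose proof (Jobj_sub_root b Hn) as Hsub.
assert (HnR : 0 < INR n) by (apply lt_0_INR; lia).
assert (Hl1 : 0 <= lam * rsum p (fun j => Rabs (b j)) - lam * rsum p (fun j => Rabs (zhat j))
                - rsum p (fun j => (b j - zhat j) * zhat (p + j)%nat)).
{ rewrite <- !rsum_mult_l, <- !rsum_minus. apply rsum_nonneg. intros j Hj.
  pose proof (soft_threshold_subgradient lam (zhat j) (zhat (p + j)%nat) (b j) Hlam
                (root_top j Hj)). lra. }
pose proof (rsum_sq_nonneg n (fun k => rsum p (fun j => X k j * (b j - zhat j)))).
pose proof (rsum_sq_nonneg p (fun j => b j - zhat j)).
assert (Hw1 : 0 < / (2 * INR n)) by (apply Rinv_0_lt_compat; lra).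
assert (Hw2 : 0 < alpha / (2 * INR n)) by (unfold Rdiv; apply Rmult_lt_0_compat; lra).
split; [nra|].
intros Heq j Hj.
assert (Hdiff : rsum p (fun j => (b j - zhat j) ^ 2) = 0) by nra.
pose proof (rsum_sq_eq0 p (fun j => b j - zhat j) Hdiff j Hj). lra.
Qed.

End SemismoothNewton.

Theorem theorem2 (n p : nat) (X : nat -> nat -> R) (y : nat -> R)
  (lam alpha : R) (zhat : nat -> R)
  (Hn : (0 < n)%nat) (Hlam : 0 < lam) (Halpha : 0 < alpha)
  (Hroot : forall i, (i < 2 * p)%nat -> Fmap n p X y lam alpha zhat i = 0) :
  (exists delta, 0 < delta /\
    forall z0 : nat -> R, dist2 (2 * p) z0 zhat < delta ->
      (exists z : nat -> nat -> R, z O = z0 /\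
         forall k, newton_step n p X y lam alpha (z k) (z (S k))) /\
      (forall z : nat -> nat -> R, z O = z0 ->
         (forall k, newton_step n p X y lam alpha (z k) (z (S k))) ->
         (forall eps, 0 < eps -> exists K, forall k, (K <= k)%nat ->
             dist2 (2 * p) (z k) zhat < eps) /\
         (forall eps, 0 < eps -> exists K, forall k, (K <= k)%nat ->
             dist2 (2 * p) (z (S k)) zhat <= eps * dist2 (2 * p) (z k) zhat)))
  /\
  (forall b : nat -> R,
     Jobj n p X y lam alpha zhat <= Jobj n p X y lam alpha b /\
     (Jobj n p X y lam alpha b = Jobj n p X y lam alpha zhat ->
        forall j, (j < p)%nat -> b j = zhat j)).
Proof.
split; [|intros b; exact (Jobj_unique_minimizer n p X y lam alpha zhat Hlam Hroot Hn Halpha b)].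
destruct (activity_preserved_near_root p lam zhat Hlam) as [delta [Hdelta Hnear]].
assert (Hzhat : dist2 (2 * p) zhat zhat < delta) by (rewrite dist2_eq0; auto).
exists delta. split; [exact Hdelta|]. intros z0 Hz0. split.
- exists (fun k => match k with O => z0 | S _ => zhat end). split; [reflexivity|].
  intros [|k]; apply newton_step_to_root; auto.
- intros z Hstart Hstep.
  assert (Hlands : forall k i, (i < 2 * p)%nat -> z (S k) i = zhat i).
  { induction k as [|k IH].
    - apply (newton_step_lands_on_root n p X y lam alpha zhat Hlam Hroot (z 0%nat));
        [apply Hnear; now rewrite Hstart | apply Hstep].
    - apply (newton_step_lands_on_root n p X y lam alpha zhat Hlam Hroot (z (S k)));
        [apply Hnear; now rewrite dist2_eq0 | apply Hstep]. }
  assert (Hexact : forall k, dist2 (2 * p) (z (S k)) zhat = 0)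
    by (intros k; apply dist2_eq0, Hlands).
  split.
  + intros eps Heps. exists 1%nat. intros [|k] Hk; [lia|]. rewrite Hexact. exact Heps.
  + intros eps Heps. exists 0%nat. intros k _. rewrite Hexact.
    apply Rmult_le_pos; [lra | apply sqrt_pos].
Qed.
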